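(* Let $\mathcal{G}=(\mathcal{V},\mathcal{A})$ be the information-flow graph of a single-sender single-uniprior index-coding instance with message lengths $q_1,\dots,q_n$. Then \[ \ell^*(\mathcal{G}) \leq \sum_{k \in \mathcal{V}} q_k - \sum_{i \in \mathcal{L}(\mathcal{G})} q_i - \sum_{\mathcal{V}_{S} \in \mathbb{V}} \min_{a \in \mathcal{V}_{S}} q_a, \] where $\mathbb{V}$ is the set of vertex sets of all leaf SCCs of $\mathcal{G}$.
   Context: Single-sender single-uniprior index coding: there are $n$ receivers and $n$ independent messages $x_1,\dots,x_n$; message $x_i$ consists of $q_i\ge 1$ bits, each independently uniformly distributed on $\{0,1\}$. A single sender knows all messages. Receiver $i$ knows $x_i$ a priori and requests a set $\mathcal{W}_i$ of messages with $x_i\notin\mathcal{W}_i$. The information-flow graph is the directed graph $\mathcal{G}=(\mathcal{V},\mathcal{A})$ with $\mathcal{V}=\{1,\dots,n\}$ and an arc $(j\to i)\in\mathcal{A}$ iff $x_j\in\mathcal{W}_i$. An index code of length $\ell$ consists of an encoding function $E:\{0,1\}^{\sum_i q_i}\to\{0,1\}^\ell$ and, for each receiver $i$, a decoding function $D_i$ such that $D_i(E(x_1,\dots,x_n),x_i)$ equals the tuple of messages in $\mathcal{W}_i$ for all values of the messages. $\ell^*(\mathcal{G})$ denotes the minimum length of an index code. A leaf vertex is a vertex with no outgoing arcs; $\mathcal{L}(\mathcal{G})$ is the set of leaf vertices. A strongly connected component (SCC) is a maximal subgraph in which every ordered pair of vertices is joined by a directed path inside the subgraph. A leaf SCC is an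 SCC with at least two vertices from which no arc goes to a vertex outside the SCC. *)

From mathcomp Require Import all_boot all_order all_algebra.
From mathcomp Require Import boolp.
Set Implicit Arguments. Unset Strict Implicit. Unset Printing Implicit Defensive.

Section IndexCoding.
Variables (n : nat) (q : 'I_n -> nat).

Definition msg (i : 'I_n) := {ffun 'I_(q i) -> bool}.
Definition msgs := {dffun forall i : 'I_n, msg i}.

(* arc relation: A j i  <=>  arc (j -> i)  <=>  x_j \in W_i *)
Variable A : rel 'I_n.

(* An index code of length l: an encoding E into l bits, and for every
   receiver i a decoding function D i taking the codeword and x_i and
   returning (a tuple indexed by all j, of which only the entries with
   x_j \in W_i, i.e. A j i, are constrained) the requested messages. *)
Definition is_index_code (l : nat) (E : msgs -> {ffun 'I_l -> bool})
  (D : forall i : 'I_n, {ffun 'I_l -> bool} -> msg i -> forall j : 'I_n, msg j) :=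
  forall (x : msgs) (i j : 'I_n), A j i -> D i (E x) (x i) j = x j.

Definition has_index_code (l : nat) : Prop :=
  exists E D, @is_index_code l E D.

Lemma has_index_code_exists : exists l, asbool (has_index_code l).
Proof.
exists #|msgs|; apply/asboolP.
pose E := fun x : msgs => [ffun k : 'I_#|msgs| => k == enum_rank x].
have Einj : injective E.
  move=> x y /ffunP /(_ (enum_rank x)); rewrite !ffunE eqxx => /esym/eqP.
  by move/enum_rank_inj.
exists E.
exists (fun i c (_ : msg i) j =>
  match [pick y | E y == c] with Some y => y j | None => [ffun=> false] end).
move=> x i j _; case: pickP => [y /eqP/Einj -> //|/(_ x)]; by rewrite eqxx.
Qed.

Definition ell_star : nat := ex_minn has_index_code_exists.

Definition leaves : {set 'I_n} := [set i | [forall k, ~~ A i k]].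

Definition induced_rel (C : {set 'I_n}) : rel 'I_n :=
  [rel x y | [&& x \in C, y \in C & A x y]].

Definition strongly_connected (C : {set 'I_n}) : bool :=
  [forall u in C, forall v in C, connect (induced_rel C) u v].

Definition is_scc (C : {set 'I_n}) : bool := maxset strongly_connected C.

Definition is_leaf_scc (C : {set 'I_n}) : bool :=
  [&& is_scc C, 1 < #|C| & [forall u in C, forall w, A u w ==> (w \in C)]].

Definition leaf_sccs : {set {set 'I_n}} := [set C | is_leaf_scc C].

(* min_{a in C} q_a ; the neutral element (max of all q) is irrelevant for
   nonempty C, which is the case for every leaf SCC *)
Definition max_q : nat := \max_(k : 'I_n) q k.
Definition min_q (C : {set 'I_n}) : nat :=
  \big[minn/max_q]_(a in C) q a.

End IndexCoding.

From mathcomp Require Import all_boot all_order all_algebra.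
From mathcomp Require Import boolp zify.
Set Implicit Arguments. Unset Strict Implicit. Unset Printing Implicit Defensive.
Import Order.TTheory.

(* Every leaf SCC C is closed under outgoing arcs, so every receiver wanting a
   message of C lies in C.  Pick a hub a in C minimising q_a and broadcast, for
   every other non-leaf v in C, the q_v bits x_v XOR x_a (x_a zero-padded);
   send every remaining non-leaf message uncoded and nothing for leaves.  A
   receiver i in C reads x_a off its own coded block (q_a <= q_i) and then
   every x_v of C.  Each leaf SCC thus saves q_a = min_C q bits, and leaves
   save their own q_i since nobody requests them. *)

Lemma has_index_code_of_encoding n (q : 'I_n -> nat) (A : rel 'I_n)
    (Y : finType) (l : nat) (f : msgs q -> Y) :
  #|Y| <= 2 ^ l ->
  (forall x y i j, A j i -> f x = f y -> x i = y i -> x j = y j) ->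
  has_index_code q A l.
Proof.
move=> cardY decodable.
have leY : #|Y| <= #|{ffun 'I_l -> bool}| by rewrite card_ffun card_bool card_ord.
pose g (y : Y) : {ffun 'I_l -> bool} := enum_val (widen_ord leY (enum_rank y)).
have g_inj : injective g.
  by move=> y1 y2 /enum_val_inj /(congr1 val) /= /val_inj; apply: enum_rank_inj.
exists (fun x => g (f x)).
exists (fun i c (xi : msg q i) j =>
  if [pick y : msgs q | (g (f y) == c) && (y i == xi)] is Some y then y j
  else [ffun=> false]).
move=> x i j Aji; case: pickP => [y /andP[/eqP /g_inj fy /eqP yi]|/(_ x)].
  exact: decodable Aji fy yi.
by rewrite !eqxx.
Qed.

Lemma ell_star_min n (q : 'I_n -> nat) (A : rel 'I_n) l :
  has_index_code q A l -> ell_star q A <= l.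
Proof. by move=> code; rewrite /ell_star; case: ex_minnP => m _; apply; apply/asboolP. Qed.

Section LeafSCCs.
Variables (n : nat) (A : rel 'I_n).
Implicit Types (C D : {set 'I_n}) (u v w : 'I_n).

Lemma connect_induced_subset C D u v : C \subset D ->
  connect (induced_rel A C) u v -> connect (induced_rel A D) u v.
Proof.
move=> /subsetP CD; apply: connect_sub => x y /and3P[xC yC Axy].
by apply: connect1; rewrite /induced_rel /= !CD.
Qed.

Lemma strongly_connectedU C D v :
  strongly_connected A C -> strongly_connected A D -> v \in C -> v \in D ->
  strongly_connected A (C :|: D).
Proof.
move=> /forall_inP scC /forall_inP scD vC vD.
have inC x y : x \in C -> y \in C -> connect (induced_rel A (C :|: D)) x y.
  by move=> xC yC; apply: connect_induced_subset (subsetUl C D) _;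
     apply: (forall_inP (scC x xC)).
have inD x y : x \in D -> y \in D -> connect (induced_rel A (C :|: D)) x y.
  by move=> xD yD; apply: connect_induced_subset (subsetUr C D) _;
     apply: (forall_inP (scD x xD)).
apply/forall_inP => x /setUP[xC|xD]; apply/forall_inP => y /setUP[yC|yD].
- exact: inC.
- exact: connect_trans (inC _ _ xC vC) (inD _ _ vD yD).
- exact: connect_trans (inD _ _ xD vD) (inC _ _ vC yC).
- exact: inD.
Qed.

Lemma is_scc_eq C D v : is_scc A C -> is_scc A D -> v \in C -> v \in D -> C = D.
Proof.
move=> /maxsetP[scC maxC] /maxsetP[scD maxD] vC vD.
have scCD := strongly_connectedU scC scD vC vD.
by rewrite -[LHS](maxC _ scCD (subsetUl C D)) (maxD _ _ (subsetUr C D)).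
Qed.

Lemma leaf_scc_closed C u w : C \in leaf_sccs A -> u \in C -> A u w -> w \in C.
Proof.
rewrite inE => /and3P[_ _ /forall_inP closed] uC Auw.
by move: (closed u uC) => /forallP /(_ w); rewrite Auw.
Qed.

Lemma leaf_scc_notin_leaves C v : C \in leaf_sccs A -> v \in C -> v \notin leaves A.
Proof.
rewrite inE => /and3P[/maxsetP[/forall_inP sc _] card_gt1 _] vC.
have /set0Pn[u /setD1P[uv uC]] : C :\ v != set0.
  by rewrite -card_gt0 (cardsD1 v C) vC add1n in card_gt1 *.
case/connectP: (forall_inP (sc v vC) u uC) => [[|w p]] /=.
  by move=> _ eq_uv; rewrite eq_uv eqxx in uv.
case/andP=> /and3P[_ _ Avw] _ _.
by rewrite inE negb_forall; apply/existsP; exists w; rewrite Avw.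
Qed.

End LeafSCCs.

Section HubCode.
Variables (n : nat) (q : 'I_n -> nat) (A : rel 'I_n).
Implicit Types (C : {set 'I_n}) (u v a : 'I_n) (x y : msgs q).

Definition leaf_scc_of v : option {set 'I_n} := [pick C in leaf_sccs A | v \in C].

Definition scc_hub C : option 'I_n := [pick a in C | [forall v in C, q a <= q v]].

Definition hub v : option 'I_n := obind scc_hub (leaf_scc_of v).

Definition coded_len v : nat :=
  if (v \in leaves A) || (hub v == Some v) then 0 else q v.

Definition msg_bit x v (k : nat) : bool :=
  if insub k is Some o then x v o else false.

Definition sent_bit x v (k : nat) : bool :=
  msg_bit x v k (+) (if hub v is Some a then msg_bit x a k else false).

Definition codeword x : {dffun forall v, {ffun 'I_(coded_len v) -> bool}} :=
  [ffun v => [ffun k : 'I_(coded_len v) => sent_bit x v k]].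

Lemma card_codeword :
  #|{dffun forall v, {ffun 'I_(coded_len v) -> bool}}| = 2 ^ (\sum_v coded_len v).
Proof.
rewrite card_dep_ffun foldrE big_image expn_sum.
by apply: eq_bigr => v _; rewrite card_ffun card_bool card_ord.
Qed.

Lemma leaf_scc_ofP C v : C \in leaf_sccs A -> v \in C -> leaf_scc_of v = Some C.
Proof.
move=> CL vC; rewrite /leaf_scc_of; case: pickP => [C' /andP[C'L vC']|/(_ C)].
  by congr Some; move: C'L CL; rewrite !inE => /and3P[sc' _ _] /and3P[sc _ _];
     apply: is_scc_eq sc' sc vC' vC.
by rewrite CL vC.
Qed.

Lemma leaf_scc_of_mem C v : leaf_scc_of v = Some C -> C \in leaf_sccs A /\ v \in C.
Proof. by rewrite /leaf_scc_of; case: pickP => // C' /andP[? ?] [<-]. Qed.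

Lemma scc_hubP C a0 : a0 \in C ->
  exists2 a, scc_hub C = Some a & a \in C /\ forall v, v \in C -> q a <= q v.
Proof.
move=> a0C; rewrite /scc_hub; case: pickP => [a /andP[aC /forall_inP amin]|].
  by exists a.
case: (arg_minnP q a0C) => a aC amin /(_ a) /=.
by rewrite (aC : a \in C) /=; move/negP; case; apply/forall_inP.
Qed.

Lemma hub_leaf_scc C v : C \in leaf_sccs A -> v \in C -> hub v = scc_hub C.
Proof. by move=> CL vC; rewrite /hub (leaf_scc_ofP CL vC). Qed.

Lemma hub_mem v a : hub v = Some a -> exists2 C, C \in leaf_sccs A &
  [/\ v \in C, a \in C & forall u, u \in C -> q a <= q u].
Proof.
rewrite /hub; case sv: (leaf_scc_of v) => [C|] //= hC.
have [CL vC] := leaf_scc_of_mem sv.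
have [a' hC' [a'C a'min]] := scc_hubP vC.
by move: hC; rewrite hC' => -[<-]; exists C.
Qed.

Lemma hub_notin_leaves v a : hub v = Some a -> v \notin leaves A.
Proof. by case/hub_mem=> C CL [vC _ _]; apply: leaf_scc_notin_leaves CL vC. Qed.

Lemma msg_bit_ext x y v :
  (forall k, k < q v -> msg_bit x v k = msg_bit y v k) -> x v = y v.
Proof.
move=> eq_bits; apply/ffunP => o.
by have := eq_bits o (ltn_ord o); rewrite /msg_bit valK.
Qed.

Lemma sent_bit_eq x y v k : codeword x = codeword y -> coded_len v = q v ->
  k < q v -> sent_bit x v k = sent_bit y v k.
Proof.
move=> eq_cw len_v; rewrite -{1}len_v => kv.
have /ffunP /(_ (Ordinal kv)) : codeword x v = codeword y v by rewrite eq_cw.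
by rewrite /codeword !ffunE.
Qed.

Lemma coded_len_hub v a : hub v = Some a -> v != a -> coded_len v = q v.
Proof.
move=> hv va; rewrite /coded_len (negbTE (hub_notin_leaves hv)) hv /=.
by rewrite (inj_eq Some_inj) eq_sym (negbTE va).
Qed.

Lemma hub_xor_eq x y v a k : codeword x = codeword y -> hub v = Some a ->
  v != a -> k < q v -> msg_bit x v k (+) msg_bit x a k = msg_bit y v k (+) msg_bit y a k.
Proof.
move=> eq_cw hv va kv.
by have := sent_bit_eq eq_cw (coded_len_hub hv va) kv; rewrite /sent_bit hv.
Qed.

Lemma decode_via_hub x y v a : codeword x = codeword y -> hub v = Some a ->
  x a = y a -> x v = y v.
Proof.
move=> eq_cw hv xa; have [->|va] := eqVneq v a; first exact: xa.
apply: msg_bit_ext => k kv; have := hub_xor_eq eq_cw hv va kv.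
by rewrite [msg_bit x a k]/msg_bit xa => /addIb.
Qed.

Lemma decode_hub x y v a : codeword x = codeword y -> hub v = Some a ->
  q a <= q v -> x v = y v -> x a = y a.
Proof.
move=> eq_cw hv av xv; have [<-|va] := eqVneq v a; first exact: xv.
apply: msg_bit_ext => k ka; have := hub_xor_eq eq_cw hv va (leq_trans ka av).
by rewrite [msg_bit x v k]/msg_bit xv => /addbI.
Qed.

Lemma decode_uncoded x y v : codeword x = codeword y -> v \notin leaves A ->
  hub v = None -> x v = y v.
Proof.
move=> eq_cw vl hv; apply: msg_bit_ext => k kv.
have len_v : coded_len v = q v by rewrite /coded_len (negbTE vl) hv.
by have := sent_bit_eq eq_cw len_v kv; rewrite /sent_bit hv !addbF.
Qed.

Lemma codeword_decodable x y i j : A j i -> codeword x = codeword y ->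
  x i = y i -> x j = y j.
Proof.
move=> Aji eq_cw xi; case hj: (hub j) => [a|]; last first.
  apply: decode_uncoded eq_cw _ hj.
  by rewrite inE negb_forall; apply/existsP; exists i; rewrite Aji.
have [C CL [jC aC amin]] := hub_mem hj.
have iC := leaf_scc_closed CL jC Aji.
have hi : hub i = Some a by rewrite (hub_leaf_scc CL iC) -(hub_leaf_scc CL jC).
exact: decode_via_hub eq_cw hj (decode_hub eq_cw hi (amin i iC) xi).
Qed.

Lemma has_index_code_hub : has_index_code q A (\sum_v coded_len v).
Proof.
apply: (@has_index_code_of_encoding _ q A _ _ codeword); first by rewrite card_codeword.
by move=> x y i j Aji; apply: codeword_decodable.
Qed.

Lemma sum_coded_len :
  \sum_v coded_len v + \sum_(i in leaves A) q i + \sum_(v | hub v == Some v) q v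
  = \sum_v q v.
Proof.
rewrite (big_mkcond (mem (leaves A))) (big_mkcond (fun v => hub v == Some v)).
rewrite -!big_split /=; apply: eq_bigr => v _; rewrite /coded_len.
have [hv|_] := eqVneq (hub v) (Some v).
  by rewrite (negbTE (hub_notin_leaves hv)) orbT.
by case: (v \in leaves A); rewrite /= ?addn0.
Qed.

Lemma sum_min_q_le_hubs :
  \sum_(C in leaf_sccs A) min_q q C <= \sum_(v | hub v == Some v) q v.
Proof.
rewrite (partition_big (fun v => odflt set0 (leaf_scc_of v)) (mem (leaf_sccs A))) /=;
  last first.
  move=> v /eqP; rewrite /hub; case sv: (leaf_scc_of v) => [C|] //= _.
  by case: (leaf_scc_of_mem sv).
apply: leq_sum => C CL.
have [a0 a0C] : exists a0, a0 \in C.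
  by apply/set0Pn; move: CL; rewrite inE -card_gt0 => /and3P[_ /ltnW].
have [a hC [aC _]] := scc_hubP a0C.
rewrite (bigD1 a) /=; last first.
  by rewrite (hub_leaf_scc CL aC) hC (leaf_scc_ofP CL aC) /= !eqxx.
apply: leq_trans (leq_addr _ _).
by rewrite /min_q -minEnat; apply: (bigmin_le_cond (T := nat) _ _ aC).
Qed.

End HubCode.

Theorem theorem2 (n : nat) (q : 'I_n -> nat) (A : rel 'I_n)
  (q_pos : forall i, 0 < q i)
  (no_loop : forall i, ~~ A i i) :
  ((ell_star q A)%:Z <=
     (\sum_(k : 'I_n) q k)%:Z - (\sum_(i in leaves A) q i)%:Z
     - (\sum_(C in leaf_sccs A) min_q q C)%:Z)%R.
Proof.
have ell_le := ell_star_min (has_index_code_hub q A).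
have saving := sum_min_q_le_hubs q A.
by rewrite -(sum_coded_len q A) !PoszD; lia.
Qed.
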